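(* Let $L=dN$ with integers $d\ge2$, $N\ge1$, consider the flat initial condition, and let $0<|z|<r_0$ with $\mathcal E_{\rm flat}(z)\ne0$. Then for $v\in\mathcal R_z$ and $u\in\mathcal L_z$, $$\mathrm{ch}_{\rm flat}(v,u;z)=\begin{cases}\dfrac{q'_{z,\mathrm R}(v)\,u^N(u+1)^{d-1}}{q_{z,\mathrm R}(u)\,v^N(v+1)^{d-1}}(u-v),&\text{if }u(u+1)^{d-1}=v(v+1)^{d-1},\\[2mm] 0,&\text{otherwise.}\end{cases}$$
   Context: $\rho=N/L=1/d$, $r_0=\rho^\rho(1-\rho)^{1-\rho}$. Flat initial condition $Y=(y_1,\dots,y_N)$, $y_i=(i-N)d$. For $0<|z|<r_0$, $\mathcal L_z$ ($\mathcal R_z$) is the set of roots of $w^N(w+1)^{L-N}=z^L$ with real part $<-\rho$ ($>-\rho$); $q_{z,\mathrm R}(w)=\prod_{v\in\mathcal R_z}(w-v)$. $\mathcal G_\lambda(W)=\det[w_i^{N-j}(w_i+1)^{\lambda_j}]/\det[w_i^{N-j}]$; $\lambda(Y)=(y_N,y_{N-1}+1,\dots,y_1+N-1)$; $\mathcal E_{\rm flat}(z)=\mathcal G_{\lambda(Y)}(\mathcal R_z)$ and $\mathrm{ch}_{\rm flat}(v,u;z)=\mathcal G_{\lambda(Y)}(\mathcal R_z\cup\{u\}\setminus\{v\})/\mathcal E_{\rm flat}(z)$. *)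

From HB Require Import structures.
From mathcomp Require Import all_boot all_order all_algebra.
From mathcomp Require Import complex.
Set Implicit Arguments. Unset Strict Implicit. Unset Printing Implicit Defensive.
Import Order.TTheory GRing.Theory Num.Theory.
Local Open Scope ring_scope.

Section Flat.
Variable R : rcfType.
Local Notation C := R[i].

Definition rho (N L : nat) : C := N%:R / L%:R.

(* r_0 = rho^rho (1-rho)^(1-rho), written for rho = 1/d:
   (1/d)^(1/d) * ((d-1)/d)^((d-1)/d) *)
Definition r0 (d : nat) : C :=
  d.-root (1 / d%:R) * (d.-root ((d%:R - 1) / d%:R)) ^+ d.-1.

Definition bethe_poly (N L : nat) (z : C) : {poly C} :=
  'X^N * ('X + 1) ^+ (L - N) - (z ^+ L)%:P.

Definition bethe_roots (N L : nat) (z : C) : seq C :=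
  proj1_sig (closed_field_poly_normal (bethe_poly N L z)).

Definition Lset (N L : nat) (z : C) : seq C :=
  undup [seq w <- bethe_roots N L z | 'Re w < - rho N L].
Definition Rset (N L : nat) (z : C) : seq C :=
  undup [seq w <- bethe_roots N L z | 'Re w > - rho N L].

Definition qR (N L : nat) (z : C) : {poly C} :=
  \prod_(v <- Rset N L z) ('X - v%:P).

(* G_lambda(W) = det[w_i^{N-j} (w_i+1)^{lambda_j}] / det[w_i^{N-j}],
   indices 0-based: row i, column j, exponent N-1-j, lambda j = lambda_{j+1} *)
Definition Gfun (N : nat) (lam : nat -> int) (W : seq C) : C :=
  \det (\matrix_(i < N, j < N) (W`_i ^+ (N.-1 - j) * (W`_i + 1) ^ (lam j)))
  / \det (\matrix_(i < N, j < N) (W`_i ^+ (N.-1 - j))).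

Definition yflat (N d : nat) (i : nat) : int := (i%:Z - N%:Z) * d%:Z.

(* lambda(Y) = (y_N, y_{N-1} + 1, ..., y_1 + N - 1); 0-based entry j is y_{N-j} + j *)
Definition lambdaY (N : nat) (y : nat -> int) (j : nat) : int :=
  y (N - j)%N + j%:Z.

Definition Eflat (N d : nat) (z : C) : C :=
  Gfun N (lambdaY N (yflat N d)) (Rset N (d * N) z).

(* R_z ∪ {u} \ {v} *)
Definition swap_root (v u : C) (W : seq C) : seq C :=
  [seq (if w == v then u else w) | w <- W].

Definition chflat (N d : nat) (v u z : C) : C :=
  Gfun N (lambdaY N (yflat N d)) (swap_root v u (Rset N (d * N) z))
  / Eflat N d z.

End Flat.

From HB Require Import structures.
From mathcomp Require Import all_boot all_order all_algebra all_field.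
From mathcomp Require Import complex.
From mathcomp Require Import ring.
Import Order.TTheory GRing.Theory Num.Theory.
Local Open Scope ring_scope.
Set Implicit Arguments. Unset Strict Implicit. Unset Printing Implicit Defensive.

(* Write d = m + 1 and f(w) = w (w + 1)^m, so that the Bethe roots are the
   solutions of f(w)^N = (z^d)^N, and |z|^d < r0^d = |f(-1/d)|, the modulus of f
   at its critical point -1/d.  For |c| below that value, f(w) = c has exactly
   one root with Re w > -1/d: at most one by a contraction argument, at least one
   because otherwise all roots of f - c lie left of -1/d, where (f - c)' vanishes,
   against Gauss-Lucas.  Hence f maps R_z bijectively onto the N-th roots of
   (z^d)^N.
   For the flat initial condition, row i of the numerator determinant of G is
   w_i^(N-1) times (f(w_i)^-j)_j.  Swapping v for u leaves this row unchanged if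
   f(u) = f(v), and otherwise makes it equal to the row of the w in R_z with
   f(w) = f(u).  The Vandermonde denominator, as a function of the swapped entry,
   is a constant multiple of q_{z,R}(w) / (w - v). *)

Definition bmap (R : pzRingType) (m : nat) (w : R) : R := w * (w + 1) ^+ m.

Lemma bmap_invr_add1 (F : fieldType) m (w : F) :
  w + 1 != 0 -> 1 - (w + 1)^-1 = bmap m w * (w + 1)^-1 ^+ m.+1.
Proof.
move=> w1; rewrite /bmap exprVn exprS invfM.
have wm : (w + 1) ^+ m != 0 by rewrite expf_neq0.
by field; rewrite wm w1.
Qed.

Lemma bmap_neq0 (R : idomainType) m (w : R) :
  (0 < m)%N -> bmap m w != 0 -> w != 0 /\ w + 1 != 0.
Proof. by move=> m_gt0; rewrite /bmap mulf_eq0 negb_or expf_eq0 m_gt0 => /andP[-> ->]. Qed.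

Lemma ler_norm_subrXX (R : numDomainType) n (x y B : R) :
  `|x| <= B -> `|y| <= B -> `|x ^+ n.+1 - y ^+ n.+1| <= `|x - y| * (B ^+ n *+ n.+1).
Proof.
move=> xB yB; have B0 : 0 <= B := le_trans (normr_ge0 x) xB.
rewrite subrXX normrM ler_wpM2l // (le_trans (ler_norm_sum _ _ _)) //.
apply: le_trans (_ : \sum_(i < n.+1) B ^+ n <= _); last by rewrite sumr_const card_ord.
apply: ler_sum => i _; rewrite normrM !normrX.
have -> : B ^+ n = B ^+ (n - i) * B ^+ i by rewrite -exprD subnK // -ltnS.
by apply: ler_pM; rewrite ?exprn_ge0 ?normr_ge0 // lerXn2r ?nnegrE ?normr_ge0.
Qed.

Lemma separable_XnsubC (R : idomainType) n (c : R) :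
  c != 0 -> n%:R != 0 :> R -> separable_poly ('X^n - c%:P).
Proof.
move=> c0; case: n => [/eqP// | n] n0.
rewrite unlock linearB /= derivC subr0 derivXn.
rewrite -scaler_nat coprimepZr //= exprSr coprimep_sym mulrC coprimep_addl_mul.
by rewrite -polyCN -[X in coprimep _ X]mulr1 mul_polyC coprimepZr ?oppr_eq0 ?coprimep1.
Qed.

Lemma roots_XnsubC (F : closedFieldType) n (c : F) : c != 0 -> n%:R != 0 :> F ->
  exists ts : seq F, [/\ uniq ts, size ts = n & forall t, (t \in ts) = (t ^+ n == c)].
Proof.
move=> c0 n0; have n_gt0 : (0 < n)%N by case: n n0 => [/eqP|].
have [ts def_p] := closed_field_poly_normal ('X^n - c%:P).
rewrite lead_coefXnsubC // scale1r in def_p.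
exists ts; split.
- by rewrite -separable_prod_XsubC -def_p separable_XnsubC.
- by have := size_prod_XsubC ts id; rewrite -def_p size_XnsubC // => -[].
- by move=> t; rewrite -root_prod_XsubC -def_p rootE !hornerE subr_eq0.
Qed.

Lemma horner_deriv_prod_XsubC (F : fieldType) (rs : seq F) (y : F) :
    (forall r, r \in rs -> y != r) ->
  (\prod_(r <- rs) ('X - r%:P))^`().[y] =
    (\prod_(r <- rs) ('X - r%:P)).[y] * \sum_(r <- rs) (y - r)^-1.
Proof.
elim: rs => [|r rs IH] y_rs; first by rewrite !big_nil derivC horner0 mulr0.
have yr : y - r != 0 by rewrite subr_eq0 y_rs ?mem_head.
rewrite !big_cons derivM derivXsubC mul1r hornerD !hornerM hornerXsubC IH; last first.
  by move=> x x_rs; rewrite y_rs // inE x_rs orbT.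
by field.
Qed.

Lemma prod_subr_neq0 (R : idomainType) (s : seq R) w :
  w \notin s -> \prod_(r <- s) (w - r) != 0.
Proof.
move=> ws; rewrite prodf_seq_neq0; apply/allP => r rs.
by rewrite subr_eq0; apply: contraNneq ws => ->.
Qed.

Lemma horner_prod_XsubC_rem (R : comNzRingType) (s : seq R) v u : v \in s ->
  (\prod_(r <- s) ('X - r%:P)).[u] = (u - v) * \prod_(r <- rem v s) (u - r).
Proof.
move=> vs; rewrite (big_rem v vs) hornerM hornerXsubC horner_prod.
by under eq_bigr do rewrite hornerXsubC.
Qed.

Lemma horner_deriv_prod_XsubC_rem (R : comNzRingType) (s : seq R) v : v \in s ->
  (\prod_(r <- s) ('X - r%:P))^`().[v] = \prod_(r <- rem v s) (v - r).
Proof.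
move=> vs; rewrite (big_rem v vs) derivM derivXsubC mul1r hornerD hornerM hornerXsubC.
by rewrite subrr mul0r addr0 horner_prod; under eq_bigr do rewrite hornerXsubC.
Qed.

Section HalfPlane.
Variable R : rcfType.
Local Notation C := R[i].

Lemma Re_invr_gt0 (x : C) : 0 < 'Re x -> 0 < 'Re x^-1.
Proof.
move=> Rex; rewrite ReV divr_gt0 // exprn_gt0 // normr_gt0.
by apply: contraTneq Rex => ->; rewrite raddf0 ltxx.
Qed.

(* Gauss-Lucas: the logarithmic derivative at [a] has positive real part. *)
Lemma deriv_prod_XsubC_neq0 (rs : seq C) (a : C) : rs != [::] ->
  (forall r, r \in rs -> 'Re r < 'Re a) -> (\prod_(r <- rs) ('X - r%:P))^`().[a] != 0.
Proof.
move=> rs_nil lt_rs.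
have Re_pos r : r \in rs -> 0 < 'Re (a - r)^-1.
  by move=> r_rs; rewrite Re_invr_gt0 // raddfB subr_gt0 lt_rs.
have a_rs r : r \in rs -> a != r.
  by move=> r_rs; apply: contraTneq (lt_rs r r_rs) => ->; rewrite ltxx.
rewrite horner_deriv_prod_XsubC // mulf_neq0 //.
  rewrite horner_prod prodf_seq_neq0; apply/allP => r r_rs /=.
  by rewrite hornerXsubC subr_eq0 a_rs.
case: rs rs_nil lt_rs Re_pos {a_rs} => // r rs _ _ Re_pos.
apply: contraTneq (Re_pos r (mem_head _ _)) => /(congr1 (fun x => 'Re x)).
rewrite /= raddf_sum big_cons raddf0 => /eqP; rewrite addr_eq0 => /eqP ->.
rewrite oppr_gt0 real_ltNge ?real0 ?rpred_sum ?negbK // => [|s _]; last exact: Creal_Re.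
rewrite big_seq sumr_ge0 // => s s_rs.
by rewrite ltW // Re_pos // inE s_rs orbT.
Qed.
End HalfPlane.

Section BetheMap.
Variable R : rcfType.
Local Notation C := R[i].
Variable m : nat.
Hypothesis m_gt0 : (0 < m)%N.
Local Notation d := m.+1.
Local Notation kappa := (m%:R / d%:R : C).

Definition crit_pt : C := - d%:R^-1.
(* [crit_val = `|bmap m crit_pt|] *)
Definition crit_val : C := d%:R^-1 * kappa ^+ m.
Definition bmap_poly : {poly C} := 'X * ('X + 1) ^+ m.

Lemma kappa_gt0 : 0 < kappa. Proof. by rewrite divr_gt0 ?ltr0n. Qed.

Lemma crit_pt_real : crit_pt \is Num.real.
Proof. by rewrite rpredN rpredV realn. Qed.

Lemma crit_pt_add1 : crit_pt + 1 = kappa.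
Proof. by rewrite /crit_pt -natr1; field; rewrite natr1 pnatr_eq0. Qed.

Lemma Re_add1 (w : C) : 'Re (w + 1) = 'Re w + 1.
Proof. by rewrite raddfD /= (Creal_ReP _ (rpred1 _)). Qed.

Lemma lt_kappa_norm_add1 w : crit_pt < 'Re w -> kappa < `|w + 1|.
Proof.
move=> lt_w; apply: lt_le_trans (leif_Re_Creal (w + 1)).
by rewrite Re_add1 -crit_pt_add1 ltrD2r.
Qed.

Lemma crit_val_le_norm_bmap w : 'Re w = crit_pt -> crit_val <= `|bmap m w|.
Proof.
move=> Rew; have kappa_ge0 := ltW kappa_gt0.
rewrite /crit_val /bmap normrM normrX ler_pM ?invr_ge0 ?ler0n ?exprn_ge0 //.
  apply: le_trans (leif_normC_Re_Creal w).
  by rewrite Rew /crit_pt normrN ger0_norm // invr_ge0 ler0n.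
rewrite lerXn2r ?nnegrE ?normr_ge0 //.
by apply: le_trans (leif_Re_Creal (w + 1)); rewrite Re_add1 Rew crit_pt_add1.
Qed.

(* [s = (w + 1)^-1] solves [1 - s = c s^d], and [s |-> 1 - c s^d] contracts the
   disc [|s| <= 1/kappa] as soon as [|c| < crit_val]. *)
Lemma bmap_inj_half_plane w1 w2 : crit_pt < 'Re w1 -> crit_pt < 'Re w2 ->
  `|bmap m w1| < crit_val -> bmap m w1 = bmap m w2 -> w1 = w2.
Proof.
move=> Rw1 Rw2 lt_c eq_c.
have add1_neq0 w : crit_pt < 'Re w -> w + 1 != 0.
  by move/lt_kappa_norm_add1/(lt_trans kappa_gt0); rewrite normr_gt0.
have norm_s w : crit_pt < 'Re w -> `|(w + 1)^-1| <= kappa^-1.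
  move/lt_kappa_norm_add1=> lt_w; rewrite normfV ltW // ltf_pV2 ?posrE ?kappa_gt0 //.
  exact: lt_trans kappa_gt0 lt_w.
have e1 := bmap_invr_add1 m (add1_neq0 _ Rw1).
have e2 := bmap_invr_add1 m (add1_neq0 _ Rw2).
rewrite -eq_c in e2; set s1 := (w1 + 1)^-1 in e1 norm_s *; set s2 := (w2 + 1)^-1 in e2.
have eq_s : s1 - s2 = bmap m w1 * (s2 ^+ d - s1 ^+ d) by rewrite mulrBr -e1 -e2; ring.
have le_s : `|s1 - s2| <= `|bmap m w1| * (kappa^-1 ^+ m *+ d) * `|s1 - s2|.
  rewrite {1}eq_s normrM distrC -mulrA [_ * `|s1 - s2|]mulrC ler_wpM2l //.
  by rewrite ler_norm_subrXX ?norm_s.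
have q_lt1 : `|bmap m w1| * (kappa^-1 ^+ m *+ d) < 1.
  have crit_q : crit_val * (kappa^-1 ^+ m *+ d) = 1.
    rewrite /crit_val mulrnAr exprVn mulfK ?expf_neq0 ?lt0r_neq0 ?kappa_gt0 //.
    by rewrite -[RHS](@mulVf _ d%:R) ?pnatr_eq0 // mulr_natr.
  by rewrite -[X in _ < X]crit_q ltr_pM2r // pmulrn_lgt0 // exprn_gt0 // invr_gt0 kappa_gt0.
have s12 : s1 = s2.
  case: (eqVneq s1 s2) => // ne_s.
  have s12_gt0 : 0 < `|s1 - s2| by rewrite normr_gt0 subr_eq0.
  by rewrite (ler_pMl _ s12_gt0) (lt_geF q_lt1) in le_s.
by move/invr_inj/addIr: s12.
Qed.

Lemma horner_bmap_poly w : bmap_poly.[w] = bmap m w.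
Proof. by rewrite /bmap_poly !hornerE. Qed.

Lemma deriv_bmap_poly_crit : bmap_poly^`().[crit_pt] = 0.
Proof.
rewrite derivM derivX mul1r deriv_exp derivD derivX derivC addr0 mul1r.
rewrite !(hornerE, hornerMn) crit_pt_add1.
have -> : kappa ^+ m + crit_pt * (kappa ^+ m.-1 *+ m) =
          kappa ^+ m.-1 * (kappa + crit_pt * m%:R).
  have -> : kappa ^+ m = kappa * kappa ^+ m.-1 by rewrite -exprS prednK.
  by rewrite mulr_natr; ring.
have -> : kappa + crit_pt * m%:R = 0.
  by rewrite /crit_pt; field; rewrite nat1r pnatr_eq0.
by rewrite mulr0.
Qed.

Lemma bmap_surj_half_plane c :
  `|c| < crit_val -> exists2 w, crit_pt < 'Re w & bmap m w = c.
Proof.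
move=> lt_c; pose p := bmap_poly - c%:P.
have p_eval w : p.[w] = bmap m w - c by rewrite hornerD hornerN hornerC horner_bmap_poly.
have [rs def_p] := closed_field_poly_normal p.
have p01 : p.[0] != p.[1].
  rewrite !p_eval /bmap mul0r mul1r (inj_eq (addIr _)) eq_sym expf_eq0.
  by rewrite -mulr2n pnatr_eq0 andbF.
have rs_nil : rs != [::].
  by apply: contraNneq p01 => rs0; rewrite def_p rs0 big_nil !hornerE.
have lc_p : lead_coef p != 0.
  by apply: contraNneq p01 => /eqP; rewrite lead_coef_eq0 => /eqP ->; rewrite !horner0.
have root_rs r : r \in rs -> bmap m r = c.
  move=> r_rs; apply/eqP; rewrite -subr_eq0 -p_eval def_p hornerZ horner_prod.
  by rewrite (big_rem r r_rs) /= hornerXsubC subrr mul0r mulr0.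
have [/hasP [r r_rs lt_r] | /hasPn ge_rs] := boolP (has (fun r => crit_pt < 'Re r) rs).
  by exists r; rewrite ?root_rs.
have lt_rs r : r \in rs -> 'Re r < 'Re crit_pt.
  move=> r_rs; rewrite (Creal_ReP _ crit_pt_real).
  have := ge_rs r r_rs; rewrite -real_leNgt ?crit_pt_real ?Creal_Re //.
  rewrite le_eqVlt => /orP [/eqP Rr | //].
  by have := crit_val_le_norm_bmap Rr; rewrite root_rs // (lt_geF lt_c).
have dp : p^`().[crit_pt] = lead_coef p * (\prod_(r <- rs) ('X - r%:P))^`().[crit_pt].
  by rewrite {1}def_p derivZ hornerZ.
move: dp; rewrite derivB derivC subr0 deriv_bmap_poly_crit => /esym/eqP.
by rewrite mulf_eq0 (negbTE lc_p) (negbTE (deriv_prod_XsubC_neq0 rs_nil lt_rs)).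
Qed.
End BetheMap.

Section FlatDeterminants.
Variables (F : fieldType) (m N : nat).
Hypothesis m_gt0 : (0 < m)%N.
Local Notation lam := (lambdaY N (yflat N m.+1)).

Definition Amat (y : 'I_N -> F) : 'M[F]_N :=
  \matrix_(i, j) (y i ^+ (N.-1 - j) * (y i + 1) ^ (lam j)).
Definition Vmat (y : 'I_N -> F) : 'M[F]_N := \matrix_(i, j) y i ^+ (N.-1 - j).
Definition Bmat (y : 'I_N -> F) : 'M[F]_N := \matrix_(i, j) (bmap m (y i))^-1 ^+ j.
Definition Gmat (y : 'I_N -> F) : F := \det (Amat y) / \det (Vmat y).

Lemma eq_Gmat y1 y2 : y1 =1 y2 -> Gmat y1 = Gmat y2.
Proof.
move=> eq_y; have eq_A : Amat y1 = Amat y2 by apply/matrixP => i j; rewrite !mxE eq_y.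
have eq_V : Vmat y1 = Vmat y2 by apply/matrixP => i j; rewrite !mxE eq_y.
by rewrite /Gmat eq_A eq_V.
Qed.

Lemma lambdaY_flat j : (j <= N)%N -> lam j = - (j * m)%N%:Z.
Proof. by move=> jN; rewrite /lambdaY /yflat -subzn // PoszM intS; ring. Qed.

Lemma det_Amat y : (forall i, bmap m (y i) != 0) ->
  \det (Amat y) = (\prod_i y i ^+ N.-1) * \det (Bmat y).
Proof.
move=> y_neq0.
have -> : Amat y = diag_mx (\row_i y i ^+ N.-1) *m Bmat y.
  apply/matrixP => i j; have [yi0 yi1] := bmap_neq0 m_gt0 (y_neq0 i).
  rewrite mul_diag_mx !mxE lambdaY_flat 1?ltnW // -exprnN.
  rewrite /bmap exprVn exprMn -exprM mulnC invfM mulrA.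
  have jN : (j <= N.-1)%N by rewrite -ltnS (ltn_predK (ltn_ord j)).
  by rewrite -{2}(subnK jN) exprD -(mulrA _ (y i ^+ j)) mulfV ?mulr1 // expf_neq0.
by rewrite det_mulmx det_diag; congr (_ * _); apply: eq_bigr => i _; rewrite mxE.
Qed.

Lemma det_Vmat_upd (x : 'I_N -> F) (k : 'I_N) (rs : seq F) :
    uniq rs -> size rs = N.-1 -> (forall r, r \in rs -> exists2 l, l != k & r = x l) ->
  exists c, forall w, \det (Vmat [eta x with k |-> w]) = c * \prod_(r <- rs) (w - r).
Proof.
move=> rs_uniq size_rs rs_x.
have N_gt0 : (0 < N)%N := leq_ltn_trans (leq0n k) (ltn_ord k).
pose P := \sum_(j < N) cofactor (Vmat x) k j *: 'X^(N.-1 - j).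
have P_eval w : P.[w] = \det (Vmat [eta x with k |-> w]).
  rewrite (expand_det_row _ k) horner_sum; apply: eq_bigr => j _.
  rewrite hornerZ hornerXn mulrC !mxE /= eqxx; congr (_ * _).
  rewrite /cofactor; congr (_ * \det _); apply/matrixP => a b; rewrite !mxE /=.
  by rewrite eq_sym (negbTE (neq_lift _ _)).
have size_P : (size P <= N)%N.
  rewrite /P; apply: (big_ind (fun q : {poly F} => size q <= N)%N).
  - by rewrite size_poly0.
  - by move=> p q sp sq; rewrite (leq_trans (size_polyD _ _)) // geq_max sp sq.
  move=> j _; rewrite (leq_trans (size_scale_leq _ _)) // size_polyXn.
  by rewrite (leq_ltn_trans (leq_subr _ _)) // prednK.
have P_rs : all (root P) rs.
  apply/allP => r /rs_x [l lk ->]; rewrite /root P_eval.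
  by apply/eqP/(determinant_alternate lk) => j; rewrite !mxE /= eqxx (negbTE lk).
have [q def_P] : exists q, P = q * \prod_(r <- rs) ('X - r%:P).
  by apply: uniq_roots_prod_XsubC P_rs _; rewrite uniq_rootsE.
have size_q : (size q <= 1)%N.
  have [-> | q0] := eqVneq q 0; first by rewrite size_poly0.
  have Q0 : \prod_(r <- rs) ('X - r%:P) != 0 by rewrite monic_neq0 // monic_prod_XsubC.
  move: size_P; rewrite def_P size_mul //.
  rewrite size_prod_XsubC size_rs -(prednK N_gt0) addnS /=.
  by rewrite -[(N.-1).+1]add1n leq_add2r.
exists q`_0; move=> w; rewrite -P_eval def_P hornerM {1}(size1_polyC size_q) hornerC.
by rewrite horner_prod; under eq_bigr do rewrite hornerXsubC.
Qed.

Lemma Gmat_upd_eq0 (x : 'I_N -> F) (k l : 'I_N) (w : F) :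
    (forall i, bmap m (x i) != 0) -> l != k -> bmap m w = bmap m (x l) ->
  Gmat [eta x with k |-> w] = 0.
Proof.
move=> x_neq0 lk wl.
have upd_neq0 i : bmap m ([eta x with k |-> w] i) != 0.
  by rewrite /=; case: ifP => _; rewrite ?wl x_neq0.
rewrite /Gmat det_Amat // (determinant_alternate lk) ?mulr0 ?mul0r // => j.
by rewrite !mxE /= eqxx (negbTE lk) wl.
Qed.

Lemma Gmat_upd_ratio (x : 'I_N -> F) (k : 'I_N) (rs : seq F) :
    (forall i, bmap m (x i) != 0) ->
    uniq rs -> size rs = N.-1 -> (forall r, r \in rs -> exists2 l, l != k & r = x l) ->
  exists K, forall w, bmap m w = bmap m (x k) -> \prod_(r <- rs) (w - r) != 0 ->
    Gmat [eta x with k |-> w] = K * w ^+ N.-1 / \prod_(r <- rs) (w - r).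
Proof.
move=> x_neq0 rs_uniq size_rs rs_x.
have [c det_V] := det_Vmat_upd rs_uniq size_rs rs_x.
exists ((\prod_(i | i != k) x i ^+ N.-1) * \det (Bmat x) / c) => w wk Q_neq0.
have upd_neq0 i : bmap m ([eta x with k |-> w] i) != 0.
  by rewrite /=; case: ifP => _; rewrite ?wk x_neq0.
have eq_B : Bmat [eta x with k |-> w] = Bmat x.
  by apply/matrixP => i j; rewrite !mxE /=; case: ifP => [/eqP->|]; rewrite ?wk.
rewrite /Gmat det_Amat // eq_B det_V (bigD1 k) //= eqxx.
have -> : \prod_(i | i != k) [eta x with k |-> w] i ^+ N.-1 = \prod_(i | i != k) x i ^+ N.-1.
  by apply: eq_bigr => i /negbTE /= ->.
have [-> | c_neq0] := eqVneq c 0; first by rewrite !(mul0r, invr0, mulr0).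
by field; rewrite c_neq0 Q_neq0.
Qed.
End FlatDeterminants.

Lemma rho_mul (R : rcfType) N d : (0 < N)%N -> rho R N (d * N) = d%:R^-1.
Proof.
by move=> N_gt0; rewrite /rho natrM invfM mulrCA mulfV ?mulr1 // pnatr_eq0 -lt0n.
Qed.

Lemma r0_exp (R : rcfType) m : r0 R m.+1 ^+ m.+1 = crit_val R m.
Proof.
rewrite /r0 /=.
have -> : (m.+1%:R - 1) / m.+1%:R = m%:R / m.+1%:R :> R[i] by rewrite -natr1 addrK.
by rewrite exprMn -exprM mulnC exprM !rootCK // div1r.
Qed.

Lemma eq_norm_expr (R : numDomainType) n (x y : R) :
  (0 < n)%N -> x ^+ n = y ^+ n -> `|x| = `|y|.
Proof. by move=> n_gt0 xy; apply/eqP; rewrite -(eqrXn2 n_gt0) ?normr_ge0 // -!normrX xy. Qed.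

Section FlatRoots.
Variables (R : rcfType) (m N : nat) (z : R[i]).
Hypotheses (m_gt0 : (0 < m)%N) (N_gt0 : (0 < N)%N).
Hypotheses (z_neq0 : z != 0) (z_lt_r0 : `|z| < r0 R m.+1).
Local Notation d := m.+1.
Local Notation S := (Rset N (d * N) z).

Lemma norm_zX_lt_crit_val : `|z ^+ d| < crit_val R m.
Proof.
by rewrite normrX -r0_exp ltrXn2r // ltW // (le_lt_trans (normr_ge0 z)).
Qed.

Lemma mem_bethe_roots w :
  (w \in bethe_roots N (d * N) z) = (bmap m w ^+ N == (z ^+ d) ^+ N).
Proof.
rewrite /bethe_roots; case: (closed_field_poly_normal _) => rs /= def_p.
set p := bethe_poly N (d * N) z in def_p.
have p_eval y : p.[y] = bmap m y ^+ N - (z ^+ d) ^+ N.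
  rewrite /p /bethe_poly !hornerE /bmap mulSn addKn.
  by rewrite exprMn -exprM mulnC -exprM mulnC.
have p_neq0 : p != 0.
  apply: contra_neq (expf_neq0 N (expf_neq0 d z_neq0)) => p0.
  move: (p_eval 0); rewrite p0 horner0 /bmap mul0r expr0n (gtn_eqF N_gt0) sub0r.
  by move/esym/eqP; rewrite oppr_eq0 => /eqP.
have : root p w = (w \in rs) by rewrite def_p rootZ ?lead_coef_eq0 // root_prod_XsubC.
by rewrite /root p_eval subr_eq0 => <-.
Qed.

Lemma mem_Rset w : (w \in S) = (bmap m w ^+ N == (z ^+ d) ^+ N) && (crit_pt R m < 'Re w).
Proof. by rewrite /Rset mem_undup mem_filter mem_bethe_roots rho_mul // andbC. Qed.

Lemma mem_Lset w :
  (w \in Lset N (d * N) z) = (bmap m w ^+ N == (z ^+ d) ^+ N) && ('Re w < crit_pt R m).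
Proof. by rewrite /Lset mem_undup mem_filter mem_bethe_roots rho_mul // andbC. Qed.

Lemma bmap_root_neq0 w : bmap m w ^+ N = (z ^+ d) ^+ N -> bmap m w != 0.
Proof.
by move=> /(eq_norm_expr N_gt0) wz; rewrite -normr_gt0 wz normr_gt0 expf_neq0.
Qed.

Lemma Rset_bmap_surj t : t ^+ N = (z ^+ d) ^+ N -> exists2 w, w \in S & bmap m w = t.
Proof.
move=> tN; have [|w lt_w wt] := bmap_surj_half_plane m_gt0 (c := t).
  by rewrite (eq_norm_expr N_gt0 tN) norm_zX_lt_crit_val.
by exists w; rewrite // mem_Rset wt tN eqxx.
Qed.

Lemma bmap_inj_Rset : {in S &, injective (bmap m)}.
Proof.
move=> w1 w2; rewrite !mem_Rset => /andP[/eqP w1N lt_w1] /andP[_ lt_w2].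
apply: bmap_inj_half_plane => //.
by rewrite (eq_norm_expr N_gt0 w1N) norm_zX_lt_crit_val.
Qed.

Lemma size_Rset : size S = N.
Proof.
have [||ts [ts_uniq size_ts mem_ts]] := @roots_XnsubC _ N ((z ^+ d) ^+ N).
- by rewrite !expf_neq0.
- by rewrite pnatr_eq0 -lt0n.
suff /perm_size : perm_eq (map (bmap m) S) ts by rewrite size_map size_ts.
apply: uniq_perm => //; first by rewrite (map_inj_in_uniq bmap_inj_Rset) undup_uniq.
move=> t; rewrite mem_ts; apply/mapP/eqP => [[w] | /Rset_bmap_surj [w wS <-]].
  by rewrite mem_Rset => /andP[/eqP wN _] ->.
by exists w.
Qed.

Lemma nth_Rset_neq0 (i : 'I_N) : bmap m S`_i != 0.
Proof.
have : S`_i \in S by rewrite mem_nth // size_Rset.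
by rewrite mem_Rset => /andP[/eqP /bmap_root_neq0].
Qed.

Lemma Rset_enum w : w \in S -> exists k : 'I_N, S`_k = w.
Proof.
move=> wS; have k_lt : (index w S < N)%N by rewrite -[X in (_ < X)%N]size_Rset index_mem.
by exists (Ordinal k_lt); apply: nth_index.
Qed.

Lemma rem_Rset v (k : 'I_N) : S`_k = v ->
  forall r, r \in rem v S -> exists2 l, l != k & r = S`_l.
Proof.
move=> xk r; rewrite mem_rem_uniq ?undup_uniq // => /andP[rv /Rset_enum [l xl]].
by exists l => //; apply: contraNneq rv => lk; rewrite -xl -xk lk.
Qed.

Lemma swap_root_id (v : R[i]) W : swap_root v v W = W.
Proof. by rewrite /swap_root map_id_in // => w _; case: eqP. Qed.

Lemma Gfun_swap_Rset v w (k : 'I_N) : S`_k = v ->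
  Gfun N (lambdaY N (yflat N d)) (swap_root v w S) =
    Gmat m [eta (fun i : 'I_N => S`_i) with k |-> w].
Proof.
move=> xk; apply: eq_Gmat => i /=; rewrite (nth_map 0) ?size_Rset //.
by rewrite -xk nth_uniq ?size_Rset ?undup_uniq.
Qed.

Lemma chflat_Rset_Lset v u : Eflat N d z != 0 -> v \in S -> u \in Lset N (d * N) z ->
  chflat N d v u z =
    (if bmap m u == bmap m v then
       (qR N (d * N) z)^`().[v] * (u ^+ N * (u + 1) ^+ m)
       / ((qR N (d * N) z).[u] * (v ^+ N * (v + 1) ^+ m)) * (u - v)
     else 0).
Proof.
move=> E_neq0 vS uL; move: (uL); rewrite mem_Lset => /andP[/eqP uN Re_u].
have [k xk] := Rset_enum vS.
rewrite /Eflat -{1}(swap_root_id v S) (Gfun_swap_Rset _ xk) in E_neq0.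
rewrite /chflat /Eflat -{2}(swap_root_id v S) !(Gfun_swap_Rset _ xk).
case: ifP => [/eqP uv | /negbT uv]; last first.
  have [w wS wu] := Rset_bmap_surj uN; have [l xl] := Rset_enum wS.
  have lk : l != k by apply: contraNneq uv => lk; rewrite -wu -xl lk xk.
  by rewrite (Gmat_upd_eq0 m_gt0 nth_Rset_neq0 lk) ?mul0r ?xl.
have [|K GK] := Gmat_upd_ratio m_gt0 nth_Rset_neq0 (rem_uniq v (undup_uniq _)) _ (rem_Rset xk).
  by rewrite size_rem // size_Rset.
have u_S : u \notin S by rewrite mem_Rset negb_and lt_gtF ?orbT.
have Qu_neq0 := prod_subr_neq0 (contra (@mem_rem _ v S u) u_S).
have Qv_neq0 : \prod_(r <- rem v S) (v - r) != 0.
  by rewrite prod_subr_neq0 // mem_rem_uniq ?undup_uniq // inE eqxx.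
rewrite GK ?xk // in E_neq0; rewrite !GK ?xk -?uv //.
rewrite /qR horner_deriv_prod_XsubC_rem // (horner_prod_XsubC_rem _ vS).
have bmapX w : w ^+ N * (w + 1) ^+ m = w ^+ N.-1 * bmap m w.
  by rewrite /bmap mulrA -exprSr prednK.
rewrite !bmapX uv.
have K_neq0 : K != 0 by apply: contraNneq E_neq0 => ->; rewrite !mul0r.
have vN_neq0 : v ^+ N.-1 != 0 by apply: contraNneq E_neq0 => ->; rewrite mulr0 mul0r.
have v_neq0 : bmap m v != 0 by rewrite -xk nth_Rset_neq0.
have uv_neq0 : u - v != 0 by rewrite subr_eq0; apply: contraNneq u_S => ->.
by field; rewrite v_neq0 vN_neq0 Qu_neq0 Qv_neq0 uv_neq0 K_neq0.
Qed.

End FlatRoots.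

Theorem lemma10p3 (R : rcfType) (N d : nat) (z v u : R[i]) :
  (2 <= d)%N -> (1 <= N)%N ->
  z != 0 -> `|z| < r0 R d ->
  Eflat N d z != 0 ->
  v \in Rset N (d * N) z -> u \in Lset N (d * N) z ->
  chflat N d v u z =
    (if u * (u + 1) ^+ d.-1 == v * (v + 1) ^+ d.-1 then
       (qR N (d * N) z)^`().[v] * (u ^+ N * (u + 1) ^+ d.-1)
       / ((qR N (d * N) z).[u] * (v ^+ N * (v + 1) ^+ d.-1)) * (u - v)
     else 0).
Proof.
case: d => [|[|m]] // _ N_gt0 z_neq0 z_lt_r0.
exact: chflat_Rset_Lset.
Qed.
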